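(* For every nonnegative integer $r$, $$\sum_{n=1}^{\infty}\frac{1}{(2n+2r+3)(n+1)(2n+1)(2n+3)}\frac{\binom{2n}{n}}{\binom{2n+2r+2}{n+r+1}}=\frac{1}{2^{2r+1}}\left(\frac{3}{8(r+1)}+\frac{4\wp(2r+2)+2\wp(2r)}{8}\right)-\frac{1}{3(2r+3)\binom{2r+2}{r+1}}-\frac{1}{2(2r+1)\binom{2r}{r}},$$ where $\wp(q)=\int_0^{\pi/2} z\sin^q z\,\mathrm{d}z$. *)

From Stdlib Require Import Reals.
From Coquelicot Require Import Coquelicot.
Open Scope R_scope.

Definition wp (q : nat) : R := RInt (fun z => z * (sin z) ^ q) 0 (PI / 2).

Definition binomR (n k : nat) : R := Binomial.C n k.

Definition term5 (r n : nat) : R :=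
  1 / ((2 * INR n + 2 * INR r + 3) * (INR n + 1) * (2 * INR n + 1) * (2 * INR n + 3))
  * (binomR (2 * n) n / binomR (2 * n + 2 * r + 2) (n + r + 1)).

Definition rhs5 (r : nat) : R :=
  1 / 2 ^ (2 * r + 1) * (3 / (8 * (INR r + 1)) + (4 * wp (2 * r + 2) + 2 * wp (2 * r)) / 8)
  - 1 / (3 * (2 * INR r + 3) * binomR (2 * r + 2) (r + 1))
  - 1 / (2 * (2 * INR r + 1) * binomR (2 * r) r).

From Stdlib Require Import Reals Lra Lia.
From Coquelicot Require Import Coquelicot.
Open Scope R_scope.

(* For r = 0 partial fractions reduce the series to Euler's sum
   Σ_(k>=0) 1/(2k+3)^2 = π²/8 - 1, which follows by telescoping the ratios
   ∫x²cos^n / ∫cos^n of Wallis integrals at odd n.  For r -> r+1, Gosper's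
   algorithm yields a constant α_r and a rational multiple G_r(n) of
   C(2n,n)/C(2n+2r+2,n+r+1) with  t_(r+1)(n) - α_r t_r(n) = G_r(n+1) - G_r(n),
   so the sum for r+1 is α_r times the sum for r plus lim G_r - G_r(1).  The
   right-hand side satisfies the same recurrence because integration by parts
   gives (q+2)² ℘(q+2) = (q+2)(q+1) ℘(q) + 1. *)

Lemma ex_RInt_derivable (f : R -> R) (a b : R) :
  (forall x, ex_derive f x) -> ex_RInt f a b.
Proof.
  intros Hf. apply (ex_RInt_continuous (V:=R_CompleteNormedModule)).
  intros x _. apply (ex_derive_continuous (K:=R_AbsRing) (V:=R_NormedModule)), Hf.
Qed.

Lemma is_RInt_antiderivative (F f : R -> R) (a b v : R) :
  F b - F a = v ->
  (forall x, is_derive F x (f x)) -> (forall x, ex_derive f x) ->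
  is_RInt f a b v.
Proof.
  intros <- HF Hf. apply (is_RInt_derive (V:=R_CompleteNormedModule)).
  - intros x _. apply HF.
  - intros x _. apply (ex_derive_continuous (K:=R_AbsRing) (V:=R_NormedModule)), Hf.
Qed.

Lemma RInt_lincomb2 (f g : R -> R) (c d a b : R) :
  ex_RInt f a b -> ex_RInt g a b ->
  c * RInt f a b + d * RInt g a b = RInt (fun x => c * f x + d * g x) a b.
Proof.
  intros Hf Hg.
  rewrite (RInt_plus (V:=R_CompleteNormedModule) (fun x => scal c (f x)) (fun x => scal d (g x)));
    try now apply (ex_RInt_scal (V:=R_CompleteNormedModule)).
  now rewrite !(RInt_scal (V:=R_CompleteNormedModule)).
Qed.

Lemma RInt_lincomb3 (f g h : R -> R) (c d e a b : R) :
  ex_RInt f a b -> ex_RInt g a b -> ex_RInt h a b ->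
  c * RInt f a b + d * RInt g a b + e * RInt h a b
  = RInt (fun x => c * f x + d * g x + e * h x) a b.
Proof.
  intros Hf Hg Hh. rewrite (RInt_lincomb2 f g) by assumption.
  rewrite <- (RInt_scal (V:=R_CompleteNormedModule) h) by assumption.
  symmetry. apply (RInt_plus (V:=R_CompleteNormedModule)).
  - apply (ex_RInt_plus (V:=R_CompleteNormedModule));
      now apply (ex_RInt_scal (V:=R_CompleteNormedModule)).
  - now apply (ex_RInt_scal (V:=R_CompleteNormedModule)).
Qed.

Lemma is_series_telescope (a u : nat -> R) (l : R) :
  is_lim_seq u l -> (forall n, a n = u (S n) - u n) -> is_series a (l - u O).
Proof.
  intros Hu Ha.
  assert (Hs : is_lim_seq (sum_n a) (l - u O)).
  { apply (is_lim_seq_ext (fun n => u (S n) - u O)).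
    - induction n as [|n IHn]; rewrite ?sum_O, ?sum_Sn, <- ?IHn, Ha; [reflexivity|].
      unfold plus; simpl; ring.
    - apply is_lim_seq_minus'; [now apply (is_lim_seq_incr_1 u l) | apply is_lim_seq_const]. }
  exact Hs.
Qed.

Lemma is_series_telescoping_step (a b G : nat -> R) (c s l : R) :
  is_series a s -> is_lim_seq G l ->
  (forall n, b n - c * a n = G (S n) - G n) ->
  is_series b (c * s + (l - G O)).
Proof.
  intros Ha HG Hb.
  apply (is_series_ext (fun n => plus (scal c (a n)) (G (S n) - G n))).
  - intros n. rewrite <- Hb. unfold plus, scal; simpl. unfold mult; simpl. ring.
  - apply (is_series_plus (V:=R_NormedModule)).
    + now apply (is_series_scal (V:=R_NormedModule)).
    + now apply (is_series_telescope _ G).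
Qed.

Lemma is_lim_seq_inv_INR : is_lim_seq (fun n => / INR n) 0.
Proof.
  change (Finite 0) with (Rbar_inv p_infty).
  apply is_lim_seq_inv; [exact is_lim_seq_INR | discriminate].
Qed.

Lemma is_lim_seq_quadratic_ratio (a b c d e f : R) : d <> 0 ->
  is_lim_seq (fun n => (a * INR n ^ 2 + b * INR n + c) / (d * INR n ^ 2 + e * INR n + f))
    (a / d).
Proof.
  intros Hd.
  assert (Hp : forall a b c,
    is_lim_seq (fun n => a + b * / INR n + c * (/ INR n * / INR n)) a).
  { intros a' b' c'.
    replace (Finite a') with (Finite (a' + b' * 0 + c' * (0 * 0))) by (f_equal; ring).
    apply is_lim_seq_plus'; [apply is_lim_seq_plus'|]; try apply is_lim_seq_const;
      apply is_lim_seq_mult'; try apply is_lim_seq_const;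
      try apply is_lim_seq_mult'; apply is_lim_seq_inv_INR. }
  apply (is_lim_seq_ext_loc
    (fun n => (a + b * / INR n + c * (/ INR n * / INR n))
              / (d + e * / INR n + f * (/ INR n * / INR n)))).
  - exists 1%nat. intros n Hn.
    assert (Hn0 : INR n <> 0) by (apply not_0_INR; lia).
    rewrite <- (Rdiv_mult_l_l (INR n ^ 2)) by (apply pow_nonzero, Hn0).
    f_equal; field; exact Hn0.
  - now apply is_lim_seq_div'.
Qed.

Lemma is_lim_seq_affine_ratio (a b c d : R) : c <> 0 ->
  is_lim_seq (fun n => (a * INR n + b) / (c * INR n + d)) (a / c).
Proof.
  intros Hc.
  apply (is_lim_seq_ext_loc (fun n => (a * INR n ^ 2 + b * INR n + 0)
                                      / (c * INR n ^ 2 + d * INR n + 0))).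
  - exists 1%nat. intros n Hn.
    assert (Hn0 : INR n <> 0) by (apply not_0_INR; lia).
    rewrite <- (Rdiv_mult_l_l (INR n) (a * INR n + b)) by exact Hn0.
    f_equal; ring.
  - now apply is_lim_seq_quadratic_ratio.
Qed.

Definition wallis (n : nat) : R := RInt (fun x => cos x ^ n) 0 (PI / 2).
Definition wallis_x2 (n : nat) : R := RInt (fun x => x ^ 2 * cos x ^ n) 0 (PI / 2).

Lemma sin_pow2 x : sin x ^ 2 = 1 - cos x ^ 2.
Proof. pose proof (sin2_cos2 x) as H. unfold Rsqr in H. nra. Qed.

(* [auto_derive] leaves [INR (S k)] unfolded as a [match] on [k]. *)
Ltac fold_INR_S :=
  repeat match goal with
  | |- context [match ?k with O => 1 | S _ => INR ?k + 1 end] =>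
      change (match k with O => 1 | S _ => INR k + 1 end) with (INR (S k))
  end; rewrite ?S_INR.

Ltac trig_ring := fold_INR_S; cbn [pow]; ring_simplify; rewrite ?sin_pow2; ring.

Lemma wallis_SS n : (INR n + 2) * wallis (S (S n)) = (INR n + 1) * wallis n.
Proof.
  enough (H : (INR n + 2) * wallis (S (S n)) + - (INR n + 1) * wallis n = 0) by lra.
  unfold wallis. rewrite RInt_lincomb2 by (apply ex_RInt_derivable; intros; auto_derive; auto).
  apply is_RInt_unique, (is_RInt_antiderivative (fun x => sin x * cos x ^ S n)).
  - rewrite cos_PI2, sin_0. simpl. ring.
  - intros x. auto_derive; auto. trig_ring.
  - intros x. auto_derive; auto.
Qed.

Lemma wallis_x2_SS n :
  (INR n + 2) ^ 2 * wallis_x2 (S (S n))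
  = (INR n + 2) * (INR n + 1) * wallis_x2 n - 2 * wallis (S (S n)).
Proof.
  enough (H : 2 * wallis (S (S n)) + - ((INR n + 2) * (INR n + 1)) * wallis_x2 n
               + (INR n + 2) ^ 2 * wallis_x2 (S (S n)) = 0) by lra.
  unfold wallis, wallis_x2.
  rewrite RInt_lincomb3 by (apply ex_RInt_derivable; intros; auto_derive; auto).
  apply is_RInt_unique, (is_RInt_antiderivative
    (fun x => (INR n + 2) * x ^ 2 * sin x * cos x ^ S n + 2 * x * cos x ^ S (S n))).
  - rewrite cos_PI2, sin_0. simpl. ring.
  - intros x. auto_derive; auto. trig_ring.
  - intros x. auto_derive; auto.
Qed.

Lemma wp_SS n :
  (INR n + 2) ^ 2 * wp (S (S n)) = (INR n + 2) * (INR n + 1) * wp n + 1.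
Proof.
  enough (H : (INR n + 2) ^ 2 * wp (S (S n)) + - ((INR n + 2) * (INR n + 1)) * wp n = 1)
    by lra.
  unfold wp. rewrite RInt_lincomb2 by (apply ex_RInt_derivable; intros; auto_derive; auto).
  apply is_RInt_unique, (is_RInt_antiderivative
    (fun z => - (INR n + 2) * z * sin z ^ S n * cos z + sin z ^ S (S n))).
  - rewrite cos_PI2, sin_0, sin_PI2, pow1. simpl. rewrite pow1. ring.
  - intros x. auto_derive; auto. trig_ring.
  - intros x. auto_derive; auto.
Qed.

Lemma wp_SS_div n :
  wp (S (S n)) = ((INR n + 2) * (INR n + 1) * wp n + 1) / (INR n + 2) ^ 2.
Proof. rewrite <- wp_SS. field. pose proof (pos_INR n). lra. Qed.

Lemma wp_0 : wp 0 = PI ^ 2 / 8.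
Proof.
  apply is_RInt_unique, (is_RInt_antiderivative (fun z => z ^ 2 / 2)).
  - field.
  - intros x. auto_derive; auto. simpl. field.
  - intros x. auto_derive; auto.
Qed.

Lemma wallis_1 : wallis 1 = 1.
Proof.
  apply is_RInt_unique, (is_RInt_antiderivative sin).
  - rewrite sin_PI2, sin_0. ring.
  - intros x. auto_derive; auto. simpl. ring.
  - intros x. auto_derive; auto.
Qed.

Lemma wallis_x2_1 : wallis_x2 1 = PI ^ 2 / 4 - 2.
Proof.
  apply is_RInt_unique,
    (is_RInt_antiderivative (fun x => x ^ 2 * sin x + 2 * x * cos x - 2 * sin x)).
  - rewrite sin_PI2, sin_0, cos_PI2, cos_0. field.
  - intros x. auto_derive; auto. simpl. ring.
  - intros x. auto_derive; auto.
Qed.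

Lemma wallis_pos n : 0 < wallis n.
Proof.
  apply RInt_gt_0; [exact PI2_RGT_0 | |].
  - intros x Hx. apply pow_lt, cos_gt_0; lra.
  - intros x _. apply (ex_derive_continuous (K:=R_AbsRing) (V:=R_NormedModule)).
    auto_derive; auto.
Qed.

Lemma wallis_x2_ge0 n : 0 <= wallis_x2 n.
Proof.
  apply RInt_ge_0; [pose proof PI2_RGT_0; lra | |].
  - apply ex_RInt_derivable. intros x. auto_derive; auto.
  - intros x Hx. apply Rmult_le_pos; [apply pow2_ge_0 | apply pow_le, cos_ge_0; lra].
Qed.

Lemma x_cos_le_sin x : 0 <= x <= PI / 2 -> x * cos x <= sin x.
Proof.
  intros Hx.
  assert (H : RInt (fun t => t * sin t) 0 x = sin x - x * cos x).
  { apply is_RInt_unique, (is_RInt_antiderivative (fun t => sin t - t * cos t)).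
    - rewrite sin_0. ring.
    - intros t. auto_derive; auto. ring.
    - intros t. auto_derive; auto. }
  enough (0 <= RInt (fun t => t * sin t) 0 x) by lra.
  apply RInt_ge_0; [lra | apply ex_RInt_derivable; intros t; auto_derive; auto |].
  intros t Ht. apply Rmult_le_pos; [lra | apply sin_ge_0; pose proof PI_RGT_0; lra].
Qed.

(* x cos x <= sin x gives x² cos^(n+2) x <= sin² x cos^n x = cos^n x - cos^(n+2) x. *)
Lemma wallis_x2_SS_le n : wallis_x2 (S (S n)) <= wallis n - wallis (S (S n)).
Proof.
  unfold wallis, wallis_x2.
  rewrite <- (RInt_minus (V:=R_CompleteNormedModule));
    try (apply ex_RInt_derivable; intros; auto_derive; auto).
  apply RInt_le; [pose proof PI2_RGT_0; lra | | |].
  - apply ex_RInt_derivable. intros x. auto_derive; auto.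
  - apply (ex_RInt_minus (V:=R_CompleteNormedModule));
      apply ex_RInt_derivable; intros x; auto_derive; auto.
  - intros x Hx. change (minus ?a ?b) with (a - b).
    pose proof (x_cos_le_sin x ltac:(lra)) as Hxcos.
    assert (Hcos : 0 <= cos x) by (apply cos_ge_0; lra).
    assert (Hsq : (x * cos x) ^ 2 <= sin x ^ 2) by (apply pow_incr; nra).
    assert (Hpow : 0 <= cos x ^ n) by (apply pow_le, Hcos).
    rewrite sin_pow2 in Hsq. cbn [pow]. nra.
Qed.

Definition wallis_ratio (n : nat) : R := wallis_x2 n / wallis n.

Lemma wallis_ratio_SS n :
  wallis_ratio n - wallis_ratio (S (S n)) = 2 / (INR n + 2) ^ 2.
Proof.
  unfold wallis_ratio.
  pose proof (wallis_SS n) as HW. pose proof (wallis_x2_SS n) as HX.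
  pose proof (wallis_pos n). pose proof (wallis_pos (S (S n))). pose proof (pos_INR n).
  assert (EX : wallis_x2 (S (S n))
               = ((INR n + 2) * (INR n + 1) * wallis_x2 n - 2 * wallis (S (S n)))
                 / (INR n + 2) ^ 2)
    by (rewrite <- HX; field; lra).
  assert (EW : wallis n = (INR n + 2) * wallis (S (S n)) / (INR n + 1))
    by (rewrite HW; field; lra).
  rewrite EX, EW. field. lra.
Qed.

Lemma wallis_ratio_SS_le n : wallis_ratio (S (S n)) <= / INR (S n).
Proof.
  unfold wallis_ratio. rewrite S_INR.
  pose proof (wallis_pos (S (S n))) as HW'. pose proof (pos_INR n) as Hn.
  apply Rle_trans with ((wallis n - wallis (S (S n))) / wallis (S (S n))).
  - apply Rmult_le_compat_r; [left; now apply Rinv_0_lt_compat | apply wallis_x2_SS_le].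
  - assert (EW : wallis n = (INR n + 2) * wallis (S (S n)) / (INR n + 1)).
    { rewrite (wallis_SS n). field. apply Rgt_not_eq. lra. }
    rewrite EW. right. field. split; apply Rgt_not_eq; lra.
Qed.

Lemma is_lim_seq_wallis_ratio : is_lim_seq wallis_ratio 0.
Proof.
  apply (is_lim_seq_incr_1 wallis_ratio).
  apply (is_lim_seq_incr_1 (fun n => wallis_ratio (S n))).
  apply (is_lim_seq_le_le (fun _ => 0) _ (fun n => / INR (S n))).
  - intros n. split; [|apply wallis_ratio_SS_le].
    apply Rdiv_le_0_compat; [apply wallis_x2_ge0 | apply wallis_pos].
  - apply is_lim_seq_const.
  - exact (proj1 (is_lim_seq_incr_1 _ _) is_lim_seq_inv_INR).
Qed.

Lemma odd_basel : is_series (fun k => 1 / (2 * INR k + 3) ^ 2) (PI ^ 2 / 8 - 1).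
Proof.
  set (u k := - / 2 * wallis_ratio (2 * k + 1)).
  assert (Hu : is_lim_seq u 0).
  { replace (Finite 0) with (Rbar_mult (- / 2) 0) by (simpl; f_equal; ring).
    apply is_lim_seq_scal_l, (is_lim_seq_subseq wallis_ratio 0 (fun k => 2 * k + 1)%nat).
    - apply eventually_subseq. intros k. lia.
    - exact is_lim_seq_wallis_ratio. }
  replace (PI ^ 2 / 8 - 1) with (0 - u O)
    by (unfold u, wallis_ratio; simpl; rewrite wallis_1, wallis_x2_1; field).
  apply (is_series_telescope _ u _ Hu). intros k. unfold u.
  replace (2 * S k + 1)%nat with (S (S (2 * k + 1))) by lia.
  pose proof (wallis_ratio_SS (2 * k + 1)) as H.
  replace (INR (2 * k + 1) + 2) with (2 * INR k + 3) in H
    by (rewrite plus_INR, mult_INR; simpl; ring).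
  replace (_ - _) with (/ 2 * (wallis_ratio (2 * k + 1) - wallis_ratio (S (S (2 * k + 1)))))
    by ring.
  rewrite H. field. pose proof (pos_INR k). lra.
Qed.

Definition central_binom (m : nat) : R := binomR (2 * m) m.

Lemma central_binom_pos m : 0 < central_binom m.
Proof.
  unfold central_binom, binomR, Binomial.C.
  apply Rdiv_lt_0_compat; [|apply Rmult_lt_0_compat]; apply INR_fact_lt_0.
Qed.

Lemma central_binom_0 : central_binom 0 = 1.
Proof. unfold central_binom, binomR, Binomial.C. simpl. field. Qed.

Lemma central_binom_S m :
  central_binom (S m) = 2 * (2 * INR m + 1) / (INR m + 1) * central_binom m.
Proof.
  unfold central_binom, binomR, Binomial.C.
  replace (2 * S m - S m)%nat with (S m) by lia.
  replace (2 * m - m)%nat with m by lia.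
  replace (2 * S m)%nat with (S (S (2 * m))) by lia.
  rewrite !fact_simpl, !mult_INR, !S_INR, mult_INR. simpl INR.
  pose proof (INR_fact_neq_0 m). pose proof (INR_fact_neq_0 (2 * m)). pose proof (pos_INR m).
  field. repeat split; lra.
Qed.

Definition binom_ratio (r n : nat) : R := central_binom n / central_binom (n + r + 1).

Lemma term5_binom_ratio r n :
  term5 r n = binom_ratio r n
    / ((2 * INR n + 2 * INR r + 3) * (INR n + 1) * (2 * INR n + 1) * (2 * INR n + 3)).
Proof.
  unfold term5, binom_ratio.
  replace (2 * n + 2 * r + 2)%nat with (2 * (n + r + 1))%nat by lia.
  pose proof (central_binom_pos (n + r + 1)). pose proof (pos_INR n). pose proof (pos_INR r).
  unfold central_binom in *. field. repeat split; lra.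
Qed.

Lemma binom_ratio_0 n : binom_ratio 0 n = (INR n + 1) / (4 * INR n + 2).
Proof.
  unfold binom_ratio. replace (n + 0 + 1)%nat with (S n) by lia.
  rewrite central_binom_S.
  pose proof (central_binom_pos n). pose proof (pos_INR n).
  field. repeat split; lra.
Qed.

Lemma binom_ratio_Sr r n :
  binom_ratio (S r) n
  = binom_ratio r n * ((INR n + INR r + 2) / (4 * INR n + 4 * INR r + 6)).
Proof.
  unfold binom_ratio. replace (n + S r + 1)%nat with (S (n + r + 1)) by lia.
  rewrite central_binom_S, !plus_INR. simpl INR.
  pose proof (central_binom_pos (n + r + 1)). pose proof (pos_INR n). pose proof (pos_INR r).
  field. repeat split; lra.
Qed.

Lemma binom_ratio_Sn r n :
  binom_ratio r (S n) = binom_ratio r n * ((2 * INR n + 1) * (INR n + INR r + 2))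
                        / ((INR n + 1) * (2 * INR n + 2 * INR r + 3)).
Proof.
  unfold binom_ratio. replace (S n + r + 1)%nat with (S (n + r + 1)) by lia.
  rewrite !central_binom_S, !plus_INR. simpl INR.
  pose proof (central_binom_pos (n + r + 1)). pose proof (central_binom_pos n).
  pose proof (pos_INR n). pose proof (pos_INR r).
  field. repeat split; lra.
Qed.

Lemma is_lim_seq_binom_ratio r : is_lim_seq (binom_ratio r) (/ 4 ^ S r).
Proof.
  induction r as [|r IHr].
  - apply (is_lim_seq_ext (fun n => (1 * INR n + 1) / (4 * INR n + 2))).
    { intros n. rewrite binom_ratio_0, Rmult_1_l. reflexivity. }
    replace (/ 4 ^ 1) with (1 / 4) by (simpl; field).
    apply is_lim_seq_affine_ratio. lra.
  - apply (is_lim_seq_ext (fun n => binom_ratio r n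
        * ((1 * INR n + (INR r + 2)) / (4 * INR n + (4 * INR r + 6))))).
    { intros n. rewrite binom_ratio_Sr, Rmult_1_l, !Rplus_assoc. reflexivity. }
    replace (/ 4 ^ S (S r)) with (/ 4 ^ S r * (1 / 4))
      by (simpl; field; apply pow_nonzero; lra).
    apply is_lim_seq_mult'; [exact IHr | apply is_lim_seq_affine_ratio; lra].
Qed.

(* Found by Gosper's algorithm applied to [term5 (S r) n - c * term5 r n]. *)
Definition telescoping_coef (r : nat) : R :=
  (2 * INR r + 1) * (3 * INR r + 5) / (8 * (INR r + 2) * (3 * INR r + 2)).

Definition telescoping_denom (r : nat) : R :=
  8 * (INR r + 1) * (INR r + 2) ^ 2 * (3 * INR r + 2).

Definition telescoping_cert (r n : nat) : R :=
  (8 * INR n ^ 2 + 4 * (INR r + 3) * INR n - (INR r + 2) * (INR r - 1))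
  / (telescoping_denom r * (2 * INR n + 2 * INR r + 3) * (2 * INR n + 1))
  * binom_ratio r n.

Lemma telescoping_denom_pos r : 0 < telescoping_denom r.
Proof.
  unfold telescoping_denom. pose proof (pos_INR r).
  repeat apply Rmult_lt_0_compat; try apply pow_lt; lra.
Qed.

Lemma term5_S_telescoping r n :
  term5 (S r) n - telescoping_coef r * term5 r n
  = telescoping_cert r (S n) - telescoping_cert r n.
Proof.
  rewrite !term5_binom_ratio. unfold telescoping_cert, telescoping_coef.
  rewrite binom_ratio_Sr, binom_ratio_Sn. unfold telescoping_denom. rewrite !S_INR.
  pose proof (pos_INR n). pose proof (pos_INR r).
  field. repeat split; lra.
Qed.

Lemma is_lim_seq_telescoping_cert r :
  is_lim_seq (telescoping_cert r) (2 / telescoping_denom r * / 4 ^ S r).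
Proof.
  pose proof (telescoping_denom_pos r) as HD.
  apply (is_lim_seq_ext (fun n =>
    (8 * INR n ^ 2 + 4 * (INR r + 3) * INR n + - ((INR r + 2) * (INR r - 1)))
    / (4 * telescoping_denom r * INR n ^ 2 + 2 * (2 * INR r + 4) * telescoping_denom r * INR n
       + (2 * INR r + 3) * telescoping_denom r)
    * binom_ratio r n)).
  { intros n. unfold telescoping_cert. f_equal. f_equal; ring. }
  apply is_lim_seq_mult'; [|apply is_lim_seq_binom_ratio].
  replace (2 / telescoping_denom r) with (8 / (4 * telescoping_denom r)) by (field; lra).
  apply is_lim_seq_quadratic_ratio. lra.
Qed.

Lemma rhs5_S r :
  rhs5 (S r) = telescoping_coef r * rhs5 r
               + (2 / telescoping_denom r * / 4 ^ S r - telescoping_cert r 1).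
Proof.
  unfold rhs5, telescoping_cert, telescoping_coef, telescoping_denom, binom_ratio.
  replace (2 * S r + 1)%nat with (2 + (2 * r + 1))%nat by lia.
  replace (binomR (2 * S r + 2) (S r + 1)) with (central_binom (S (S r)))
    by (unfold central_binom; f_equal; lia).
  fold (central_binom (S r)).
  replace (binomR (2 * r + 2) (r + 1)) with (central_binom (S r))
    by (unfold central_binom; f_equal; lia).
  fold (central_binom r).
  replace (1 + r + 1)%nat with (S (S r)) by lia.
  rewrite !central_binom_S, central_binom_0.
  replace (2 * S r + 2)%nat with (S (S (S (S (2 * r))))) by lia.
  replace (2 * S r)%nat with (S (S (2 * r))) by lia.
  replace (2 * r + 2)%nat with (S (S (2 * r))) by lia.
  rewrite !wp_SS_div, pow_add.
  replace (4 ^ S r) with (2 * 2 ^ (2 * r + 1))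
    by (rewrite pow_add, pow_mult; replace (2 ^ 2) with 4 by ring;
        rewrite <- (tech_pow_Rmult 4 r); ring).
  rewrite !S_INR, !mult_INR. simpl INR.
  pose proof (central_binom_pos r). pose proof (pos_INR r).
  pose proof (pow_lt 2 (2 * r + 1) ltac:(lra)).
  field. repeat split; lra.
Qed.

(* With a = 2m+3, term5 0 (m+1) = 1/(2a²(a+2)²); split it by partial fractions. *)
Definition base_cert (m : nat) : R := (INR m + 2) / (4 * (2 * INR m + 3) ^ 2).

Lemma term5_0_telescoping m :
  term5 0 (m + 1) - / 4 * (1 / (2 * INR m + 3) ^ 2) = base_cert (S m) - base_cert m.
Proof.
  rewrite term5_binom_ratio, binom_ratio_0. unfold base_cert.
  rewrite (S_INR m), plus_INR. simpl INR. pose proof (pos_INR m).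
  field. repeat split; lra.
Qed.

Lemma is_lim_seq_base_cert : is_lim_seq base_cert 0.
Proof.
  apply (is_lim_seq_ext
    (fun m => (0 * INR m ^ 2 + 1 * INR m + 2) / (16 * INR m ^ 2 + 48 * INR m + 36))).
  { intros m. unfold base_cert. f_equal; ring. }
  replace (Finite 0) with (Finite (0 / 16)) by (f_equal; field).
  apply is_lim_seq_quadratic_ratio. lra.
Qed.

Lemma rhs5_0 : rhs5 0 = / 4 * (PI ^ 2 / 8 - 1) + (0 - base_cert 0).
Proof.
  unfold rhs5, base_cert. simpl Nat.mul. simpl Nat.add.
  rewrite wp_SS_div, wp_0.
  change (binomR 2 1) with (central_binom 1).
  change (binomR 0 0) with (central_binom 0).
  rewrite central_binom_S, central_binom_0. simpl. field.
Qed.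

Theorem theorem5p0p4 (r : nat) :
  is_series (fun m : nat => term5 r (m + 1)) (rhs5 r).
Proof.
  induction r as [|r IHr].
  - rewrite rhs5_0.
    apply (is_series_telescoping_step _ _ _ _ _ _ odd_basel is_lim_seq_base_cert).
    exact term5_0_telescoping.
  - rewrite rhs5_S.
    apply (is_series_telescoping_step _ _ (fun m => telescoping_cert r (m + 1)) _ _ _ IHr).
    + apply (is_lim_seq_incr_n (telescoping_cert r) 1), is_lim_seq_telescoping_cert.
    + intros m. exact (term5_S_telescoping r (m + 1)).
Qed.
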